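(* Let $\omega\in(0,\pi/2]$ and let $K$ be a cap with rotation angle $\omega$. For every $0\le t<\omega$ the right derivatives of $\mathbf{y}_K$ and $\mathbf{x}_K$ at $t$ exist and equal $$\partial^+\mathbf{y}_K(t)=-g_K^+(t)u_t+h_K^+(t)v_t,\qquad \partial^+\mathbf{x}_K(t)=-(g_K^+(t)-1)u_t+(h_K^+(t)-1)v_t.$$ For every $0<t\le\omega$ the left derivatives exist and equal $$\partial^-\mathbf{y}_K(t)=-g_K^-(t)u_t+h_K^-(t)v_t,\qquad \partial^-\mathbf{x}_K(t)=-(g_K^-(t)-1)u_t+(h_K^-(t)-1)v_t.$$
   Context: For $t\in\mathbb{R}$ let $u_t=(\cos t,\sin t)$, $v_t=(-\sin t,\cos t)$; $p_K(t)=\max_{p\in K}p\cdot u_t$; $H(t,h)=\{p:p\cdot u_t\le h\}$. With $J_\omega=[0,\omega]\cup[\pi/2,\pi/2+\omega]$, a cap with rotation angle $\omega$ is a nonempty compact convex $K\subset\mathbb{R}^2$ with $p_K(\omega)=p_K(\pi/2)=1$, $p_K(\pi+\omega)=p_K(3\pi/2)=0$, which is an intersection of closed half-planes $H(t,h)$ with $t\in J_\omega\cup\{\pi+\omega,3\pi/2\}$. The edge $e_K(t)=\{p\in K:p\cdot u_t=p_K(t)\}$ is a segment (possibly a point); $v_K^+(t)$ (resp. $v_K^-(t)$) is its endpoint farthest in direction $v_t$ (resp. $-v_t$). Set $A_K^\pm(t)=v_K^\pm(t)$, $C_K^\pm(t)=v_K^\pm(t+\pi/2)$. For $t\in[0,\omega]$: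 $\mathbf{y}_K(t)=p_K(t)u_t+p_K(t+\pi/2)v_t$, $\mathbf{x}_K(t)=\mathbf{y}_K(t)-u_t-v_t$; $g_K^\pm(t)$ is the real number with $\mathbf{y}_K(t)=A_K^\pm(t)+g_K^\pm(t)v_t$, and $h_K^\pm(t)$ is the real number with $\mathbf{y}_K(t)=C_K^\pm(t)+h_K^\pm(t)u_t$. $\partial^+$ and $\partial^-$ denote right and left derivatives. *)

From Stdlib Require Import Reals Lra ClassicalEpsilon.
Open Scope R_scope.

Definition pt := (R * R)%type.

Definition padd (p q : pt) : pt := (fst p + fst q, snd p + snd q).
Definition psub (p q : pt) : pt := (fst p - fst q, snd p - snd q).
Definition pscale (a : R) (p : pt) : pt := (a * fst p, a * snd p).
Definition dot (p q : pt) : R := fst p * fst q + snd p * snd q.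

Definition u (t : R) : pt := (cos t, sin t).
Definition v (t : R) : pt := (- sin t, cos t).

(* Compact = closed and bounded in R^2. *)
Definition bounded (K : pt -> Prop) : Prop :=
  exists M, forall p, K p -> Rabs (fst p) <= M /\ Rabs (snd p) <= M.
Definition closed (K : pt -> Prop) : Prop :=
  forall p, (forall eps, 0 < eps -> exists q, K q /\
               Rabs (fst q - fst p) < eps /\ Rabs (snd q - snd p) < eps) -> K p.
Definition convex (K : pt -> Prop) : Prop :=
  forall p q l, K p -> K q -> 0 <= l <= 1 ->
    K (padd (pscale (1 - l) p) (pscale l q)).
Definition nonempty (K : pt -> Prop) : Prop := exists p, K p.

Definition is_support (K : pt -> Prop) (t h : R) : Prop :=
  (exists p, K p /\ dot p (u t) = h) /\ (forall p, K p -> dot p (u t) <= h).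

Definition pK (K : pt -> Prop) (t : R) : R :=
  epsilon (inhabits 0) (fun h => is_support K t h).

Definition H (t h : R) (p : pt) : Prop := dot p (u t) <= h.

Definition cap_dir (omega t : R) : Prop :=
  (0 <= t <= omega) \/ (PI / 2 <= t <= PI / 2 + omega) \/
  t = PI + omega \/ t = 3 * PI / 2.

Definition is_cap (omega : R) (K : pt -> Prop) : Prop :=
  nonempty K /\ closed K /\ bounded K /\ convex K /\
  pK K omega = 1 /\ pK K (PI / 2) = 1 /\
  pK K (PI + omega) = 0 /\ pK K (3 * PI / 2) = 0 /\
  exists S : R -> R -> Prop,
    (forall t h, S t h -> cap_dir omega t) /\
    (forall p, K p <-> forall t h, S t h -> H t h p).

Definition edge (K : pt -> Prop) (t : R) (p : pt) : Prop :=
  K p /\ dot p (u t) = pK K t.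

Definition vplus (K : pt -> Prop) (t : R) : pt :=
  epsilon (inhabits (0, 0)) (fun p => edge K t p /\
     forall q, edge K t q -> dot q (v t) <= dot p (v t)).
Definition vminus (K : pt -> Prop) (t : R) : pt :=
  epsilon (inhabits (0, 0)) (fun p => edge K t p /\
     forall q, edge K t q -> dot p (v t) <= dot q (v t)).

Definition Aplus K t := vplus K t.
Definition Aminus K t := vminus K t.
Definition Cplus K t := vplus K (t + PI / 2).
Definition Cminus K t := vminus K (t + PI / 2).

Definition yK (K : pt -> Prop) (t : R) : pt :=
  padd (pscale (pK K t) (u t)) (pscale (pK K (t + PI / 2)) (v t)).
Definition xK (K : pt -> Prop) (t : R) : pt :=
  psub (psub (yK K t) (u t)) (v t).

Definition gplus K t : R :=
  epsilon (inhabits 0) (fun g => yK K t = padd (Aplus K t) (pscale g (v t))).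
Definition gminus K t : R :=
  epsilon (inhabits 0) (fun g => yK K t = padd (Aminus K t) (pscale g (v t))).
Definition hplus K t : R :=
  epsilon (inhabits 0) (fun h => yK K t = padd (Cplus K t) (pscale h (u t))).
Definition hminus K t : R :=
  epsilon (inhabits 0) (fun h => yK K t = padd (Cminus K t) (pscale h (u t))).

Definition right_deriv (f : R -> pt) (t : R) (d : pt) : Prop :=
  forall eps, 0 < eps -> exists delta, 0 < delta /\ forall s, 0 < s < delta ->
    Rabs ((fst (f (t + s)) - fst (f t)) / s - fst d) < eps /\
    Rabs ((snd (f (t + s)) - snd (f t)) / s - snd d) < eps.
Definition left_deriv (f : R -> pt) (t : R) (d : pt) : Prop :=
  forall eps, 0 < eps -> exists delta, 0 < delta /\ forall s, 0 < s < delta ->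
    Rabs ((fst (f (t - s)) - fst (f t)) / (- s) - fst d) < eps /\
    Rabs ((snd (f (t - s)) - snd (f t)) / (- s) - snd d) < eps.

(* Danskin's argument for the support function of a nonempty compact set K: if p_r maximises
   p . u_{t+r} over K, then for every a in the edge e_K(t)
     a . (u_{t+r} - u_t) <= p_K(t+r) - p_K(t) <= p_r . (u_{t+r} - u_t),
   and by compactness p_r . v_t is eventually at most a . v_t + eps when a is the endpoint of e_K(t)
   extreme in the direction sg v_t.  Hence the one-sided derivative of p_K from the side sg = +-1
   is A_K^+-(t) . v_t.  Differentiating y_K(s) = p_K(s) u_s + p_K(s + pi/2) v_s with u' = v, v' = -u
   and v_{t+pi/2} = -u_t gives
     y_K' = (A . v_t - p_K(t + pi/2)) u_t + (p_K(t) - C . u_t) v_t = - g u_t + h v_t,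
   and x_K = y_K - u - v is handled alike. *)

From Pilot Require Import Defs.
From Stdlib Require Import Reals Lra Classical ClassicalEpsilon.
From Coquelicot Require Import Coquelicot.
Open Scope R_scope.

Section RealLimits.
Context {T : Type} {F : (T -> Prop) -> Prop} {FF : Filter F}.

Lemma filterlim_Rplus (f g : T -> R) (a b : R) :
  filterlim f F (locally a) -> filterlim g F (locally b) ->
  filterlim (fun x => f x + g x) F (locally (a + b)).
Proof. intros Hf Hg; exact (filterlim_comp_2 f g Rplus Hf Hg (filterlim_plus a b)). Qed.

Lemma filterlim_Rmult (f g : T -> R) (a b : R) :
  filterlim f F (locally a) -> filterlim g F (locally b) ->
  filterlim (fun x => f x * g x) F (locally (a * b)).
Proof. intros Hf Hg; exact (filterlim_comp_2 f g Rmult Hf Hg (filterlim_mult a b)). Qed.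

Lemma filterlim_Ropp (f : T -> R) (a : R) :
  filterlim f F (locally a) -> filterlim (fun x => - f x) F (locally (- a)).
Proof. intros Hf; exact (filterlim_comp _ _ _ f Ropp _ _ _ Hf (filterlim_opp a)). Qed.

End RealLimits.

Lemma at_right_0_intro (P : R -> Prop) (d : R) :
  0 < d -> (forall s, 0 < s < d -> P s) -> at_right 0 P.
Proof.
  intros Hd HP; exists (mkposreal d Hd); intros s Hs Hpos; apply HP.
  change (Rabs (s - 0) < d) in Hs; rewrite Rminus_0_r, Rabs_pos_eq in Hs; lra.
Qed.

Lemma at_right_0_elim (P : R -> Prop) :
  at_right 0 P -> exists d, 0 < d /\ forall s, 0 < s < d -> P s.
Proof.
  intros [d Hd]; exists d; split; [apply cond_pos |]; intros s Hs; apply Hd; [| lra].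
  change (Rabs (s - 0) < d); rewrite Rminus_0_r, Rabs_pos_eq; lra.
Qed.

Section SideDerivative.
Variable sg : R.
Hypothesis sg_sign : sg = 1 \/ sg = -1.

Definition is_side_derive (f : R -> R) (t l : R) : Prop :=
  filterlim (fun s => (f (t + sg * s) - f t) / (sg * s)) (at_right 0) (locally l).

Lemma sg_mult_neq0 s : 0 < s -> sg * s <> 0.
Proof. destruct sg_sign as [-> | ->]; lra. Qed.

Lemma Rabs_sg_mult x : Rabs (sg * x) = Rabs x.
Proof.
  destruct sg_sign as [-> | ->]; [now rewrite Rmult_1_l |].
  replace (-1 * x) with (- x) by ring; apply Rabs_Ropp.
Qed.

Lemma sg_quotient_between s X Y D : 0 < s ->
  sg * s * X <= D <= sg * s * Y -> sg * X <= sg * (D / (sg * s)) <= sg * Y.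
Proof.
  intros Hs HD; assert (E : D = sg * s * (D / (sg * s))).
  { field; destruct sg_sign as [-> | ->]; lra. }
  set (Q := D / (sg * s)) in *; rewrite E in HD; destruct sg_sign as [-> | ->]; nra.
Qed.

Lemma is_side_derive_ext (f g : R -> R) t l l' :
  (forall s, f s = g s) -> l = l' -> is_side_derive f t l -> is_side_derive g t l'.
Proof.
  intros Efg <- Hf; eapply filterlim_ext; [| exact Hf]; intros s; simpl; now rewrite !Efg.
Qed.

Lemma is_side_derive_sub_const f t c a :
  is_side_derive f t a -> is_side_derive (fun s => f s - c) t a.
Proof. intros Hf; eapply filterlim_ext; [| exact Hf]; intros s; simpl; f_equal; ring. Qed.

Lemma is_side_derive_plus f g t a b :
  is_side_derive f t a -> is_side_derive g t b ->
  is_side_derive (fun s => f s + g s) t (a + b).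
Proof.
  intros Hf Hg; eapply filterlim_ext; [| exact (filterlim_Rplus _ _ _ _ Hf Hg)].
  intros s; simpl; unfold Rdiv; ring.
Qed.

Lemma is_side_derive_opp f t a :
  is_side_derive f t a -> is_side_derive (fun s => - f s) t (- a).
Proof.
  intros Hf; eapply filterlim_ext; [| exact (filterlim_Ropp _ _ Hf)].
  intros s; simpl; unfold Rdiv; ring.
Qed.

Lemma is_side_derive_continuous f t a :
  is_side_derive f t a -> filterlim (fun s => f (t + sg * s)) (at_right 0) (locally (f t)).
Proof.
  intros Hf.
  assert (Hr : filterlim (fun s => sg * s) (at_right 0) (locally 0)).
  { replace 0 with (sg * 0) at 2 by ring.
    apply filterlim_Rmult; [apply filterlim_const |].
    intros P HP; exact (filter_imp _ _ (fun x Hx _ => Hx) HP). }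
  assert (Hlim := filterlim_Rplus _ _ _ _ (filterlim_const (f t)) (filterlim_Rmult _ _ _ _ Hr Hf)).
  rewrite Rmult_0_l, Rplus_0_r in Hlim.
  eapply filterlim_ext_loc; [| exact Hlim].
  apply (at_right_0_intro _ 1); [lra |]; intros s Hs; simpl.
  field; destruct sg_sign as [-> | ->]; lra.
Qed.

Lemma is_side_derive_mult f g t a b :
  is_side_derive f t a -> is_side_derive g t b ->
  is_side_derive (fun s => f s * g s) t (a * g t + f t * b).
Proof.
  intros Hf Hg.
  assert (Hlim := filterlim_Rplus _ _ _ _
    (filterlim_Rmult _ _ _ _ Hf (is_side_derive_continuous g t b Hg))
    (filterlim_Rmult _ _ _ _ (filterlim_const (f t)) Hg)).
  eapply filterlim_ext_loc; [| exact Hlim].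
  apply (at_right_0_intro _ 1); [lra |]; intros s Hs; simpl.
  field; destruct sg_sign as [-> | ->]; lra.
Qed.

Lemma is_side_derive_shift f t c a :
  is_side_derive f (t + c) a -> is_side_derive (fun s => f (s + c)) t a.
Proof.
  intros Hf; eapply filterlim_ext; [| exact Hf]; intros s; simpl.
  now replace (t + c + sg * s) with (t + sg * s + c) by ring.
Qed.

Lemma is_side_derive_of_derivable f t a :
  derivable_pt_lim f t a -> is_side_derive f t a.
Proof.
  intros Hd; apply filterlim_locally; intros eps.
  destruct (Hd eps (cond_pos eps)) as [d Hd'].
  apply (at_right_0_intro _ d); [apply cond_pos |]; intros s Hs.
  apply Hd'; [apply sg_mult_neq0; lra |].
  rewrite Rabs_sg_mult, Rabs_pos_eq; lra.
Qed.

End SideDerivative.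

Definition is_side_derive_pt (sg : R) (F : R -> pt) (t : R) (d : pt) : Prop :=
  is_side_derive sg (fun s => fst (F s)) t (fst d) /\
  is_side_derive sg (fun s => snd (F s)) t (snd d).

Lemma is_side_derive_pt_eventually sg F t d eps :
  is_side_derive_pt sg F t d -> 0 < eps -> at_right 0 (fun s =>
    Rabs ((fst (F (t + sg * s)) - fst (F t)) / (sg * s) - fst d) < eps /\
    Rabs ((snd (F (t + sg * s)) - snd (F t)) / (sg * s) - snd d) < eps).
Proof.
  intros [H1 H2] Heps.
  exact (filter_and _ _ (proj1 (filterlim_locally _ _) H1 (mkposreal eps Heps))
                        (proj1 (filterlim_locally _ _) H2 (mkposreal eps Heps))).
Qed.

Lemma right_deriv_of_side F t d : is_side_derive_pt 1 F t d -> right_deriv F t d.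
Proof.
  intros Hd eps Heps; destruct (at_right_0_elim _ (is_side_derive_pt_eventually _ _ _ _ _ Hd Heps))
    as [delta [Hdelta Hs]].
  exists delta; split; [exact Hdelta |]; intros s Hs'.
  specialize (Hs s Hs'); rewrite !Rmult_1_l in Hs; exact Hs.
Qed.

Lemma left_deriv_of_side F t d : is_side_derive_pt (-1) F t d -> left_deriv F t d.
Proof.
  intros Hd eps Heps; destruct (at_right_0_elim _ (is_side_derive_pt_eventually _ _ _ _ _ Hd Heps))
    as [delta [Hdelta Hs]].
  exists delta; split; [exact Hdelta |]; intros s Hs'.
  replace (t - s) with (t + -1 * s) by ring; replace (- s) with (-1 * s) by ring; auto.
Qed.

Lemma u_side_derive sg t : sg = 1 \/ sg = -1 -> is_side_derive_pt sg u t (v t).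
Proof.
  intros Hsg; split; apply (is_side_derive_of_derivable sg Hsg);
    [apply derivable_pt_lim_cos | apply derivable_pt_lim_sin].
Qed.

Lemma is_side_derive_frame_curve sg (a b : R -> R) t da db :
  sg = 1 \/ sg = -1 -> is_side_derive sg a t da -> is_side_derive sg b t db ->
  is_side_derive_pt sg (fun s => padd (pscale (a s) (u s)) (pscale (b s) (v s))) t
    (padd (pscale (da - b t) (u t)) (pscale (a t + db) (v t))).
Proof.
  intros Hsg Ha Hb.
  destruct (u_side_derive sg t Hsg) as [Hcos Hsin]; simpl in Hcos, Hsin.
  pose proof (is_side_derive_plus _ _ _ _ _ _
    (is_side_derive_mult _ Hsg _ _ _ _ _ Ha Hcos)
    (is_side_derive_mult _ Hsg _ _ _ _ _ Hb (is_side_derive_opp _ _ _ _ Hsin))) as Hfst.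
  pose proof (is_side_derive_plus _ _ _ _ _ _
    (is_side_derive_mult _ Hsg _ _ _ _ _ Ha Hsin)
    (is_side_derive_mult _ Hsg _ _ _ _ _ Hb Hcos)) as Hsnd.
  split; [eapply is_side_derive_ext; [| | exact Hfst] |
          eapply is_side_derive_ext; [| | exact Hsnd]];
  simpl; intros; ring.
Qed.

Lemma Rmult_sin_cos_unit x t : x * (sin t * sin t + cos t * cos t) = x.
Proof. pose proof (sin2_cos2 t) as E; unfold Rsqr in E; rewrite E; ring. Qed.

Lemma u_plus_PI2 t : u (t + PI / 2) = v t.
Proof. unfold u, v; rewrite cos_plus, sin_plus, cos_PI2, sin_PI2; f_equal; ring. Qed.

Lemma dot_v_plus_PI2 p t : dot p (v (t + PI / 2)) = - dot p (u t).
Proof. unfold dot, u, v; rewrite cos_plus, sin_plus, cos_PI2, sin_PI2; simpl; ring. Qed.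

Lemma frame_decomposition p t :
  p = padd (pscale (dot p (u t)) (u t)) (pscale (dot p (v t)) (v t)).
Proof.
  destruct p as [x y]; unfold padd, pscale, dot, u, v; simpl.
  f_equal; [rewrite <- (Rmult_sin_cos_unit x t) at 1 | rewrite <- (Rmult_sin_cos_unit y t) at 1];
  ring.
Qed.

Lemma dot_padd_pscale_u p g t : dot (padd p (pscale g (u t))) (u t) = dot p (u t) + g.
Proof.
  rewrite <- (Rmult_sin_cos_unit g t) at 2; unfold padd, pscale, dot, u; simpl; ring.
Qed.

Lemma dot_padd_pscale_v p g t : dot (padd p (pscale g (v t))) (v t) = dot p (v t) + g.
Proof.
  rewrite <- (Rmult_sin_cos_unit g t) at 2; unfold padd, pscale, dot, v; simpl; ring.
Qed.

Lemma epsilon_coeff_v (y A : pt) t : dot y (u t) = dot A (u t) ->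
  epsilon (inhabits 0) (fun g => y = padd A (pscale g (v t))) = dot y (v t) - dot A (v t).
Proof.
  intros Eu.
  assert (Hex : y = padd A (pscale (dot y (v t) - dot A (v t)) (v t))).
  { rewrite (frame_decomposition y t), (frame_decomposition A t) at 1; rewrite Eu.
    unfold padd, pscale; simpl; f_equal; ring. }
  pose proof (epsilon_spec (inhabits 0) (fun g => y = padd A (pscale g (v t)))
    (ex_intro _ _ Hex)) as Hg.
  set (g := epsilon _ _) in *; simpl in Hg.
  apply (f_equal (fun p => dot p (v t))) in Hg; rewrite dot_padd_pscale_v in Hg; lra.
Qed.

Lemma epsilon_coeff_u (y C : pt) t : dot y (v t) = dot C (v t) ->
  epsilon (inhabits 0) (fun h => y = padd C (pscale h (u t))) = dot y (u t) - dot C (u t).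
Proof.
  intros Ev.
  assert (Hex : y = padd C (pscale (dot y (u t) - dot C (u t)) (u t))).
  { rewrite (frame_decomposition y t), (frame_decomposition C t) at 1; rewrite Ev.
    unfold padd, pscale; simpl; f_equal; ring. }
  pose proof (epsilon_spec (inhabits 0) (fun h => y = padd C (pscale h (u t)))
    (ex_intro _ _ Hex)) as Hh.
  set (h := epsilon _ _) in *; simpl in Hh.
  apply (f_equal (fun p => dot p (u t))) in Hh; rewrite dot_padd_pscale_u in Hh; lra.
Qed.

Lemma dot_frame_u a b t : dot (padd (pscale a (u t)) (pscale b (v t))) (u t) = a.
Proof. rewrite <- (Rmult_sin_cos_unit a t) at 2; unfold padd, pscale, dot, u, v; simpl; ring. Qed.

Lemma dot_frame_v a b t : dot (padd (pscale a (u t)) (pscale b (v t))) (v t) = b.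
Proof. rewrite <- (Rmult_sin_cos_unit b t) at 2; unfold padd, pscale, dot, u, v; simpl; ring. Qed.

Lemma yK_coeff_v K t A : dot A (u t) = pK K t ->
  epsilon (inhabits 0) (fun g => yK K t = padd A (pscale g (v t))) =
  pK K (t + PI / 2) - dot A (v t).
Proof. intros E; unfold yK; rewrite epsilon_coeff_v, dot_frame_v; rewrite ?dot_frame_u; auto. Qed.

Lemma yK_coeff_u K t C : dot C (v t) = pK K (t + PI / 2) ->
  epsilon (inhabits 0) (fun h => yK K t = padd C (pscale h (u t))) = pK K t - dot C (u t).
Proof. intros E; unfold yK; rewrite epsilon_coeff_u, dot_frame_u; rewrite ?dot_frame_v; auto. Qed.

Definition frame_pt t sg h b : pt := padd (pscale h (u t)) (pscale (sg * b) (v t)).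

Lemma Rabs_lin_comb x y a b : Rabs a <= 1 -> Rabs b <= 1 -> Rabs (x * a + y * b) <= Rabs x + Rabs y.
Proof.
  intros Ha Hb; eapply Rle_trans; [apply Rabs_triang |]; rewrite !Rabs_mult.
  pose proof (Rabs_pos x); pose proof (Rabs_pos y); nra.
Qed.

Lemma Rabs_cos_le_1 t : Rabs (cos t) <= 1.
Proof. apply Rabs_le; apply COS_bound. Qed.

Lemma Rabs_sin_le_1 t : Rabs (sin t) <= 1.
Proof. apply Rabs_le; apply SIN_bound. Qed.

Section FramePoint.
Variables (t sg : R).
Hypothesis sg_sign : sg = 1 \/ sg = -1.

Lemma dot_frame_pt_u h b : dot (frame_pt t sg h b) (u t) = h.
Proof. apply dot_frame_u. Qed.

Lemma dot_frame_pt_v h b : sg * dot (frame_pt t sg h b) (v t) = b.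
Proof. unfold frame_pt; rewrite dot_frame_v; destruct sg_sign as [-> | ->]; ring. Qed.

Lemma frame_pt_close p h b :
  Rabs (fst p - fst (frame_pt t sg h b)) <= Rabs (dot p (u t) - h) + Rabs (sg * dot p (v t) - b) /\
  Rabs (snd p - snd (frame_pt t sg h b)) <= Rabs (dot p (u t) - h) + Rabs (sg * dot p (v t) - b).
Proof.
  assert (Hsg2 : sg * sg = 1) by (destruct sg_sign as [-> | ->]; ring).
  pose proof (f_equal fst (frame_decomposition p t)) as Ex.
  pose proof (f_equal snd (frame_decomposition p t)) as Ey.
  unfold frame_pt, padd, pscale, u, v in *; simpl in *.
  set (a := dot p (cos t, sin t)) in *; set (c := dot p (- sin t, cos t)) in *.
  split.
  - replace (fst p - _) with ((a - h) * cos t + (sg * c - b) * - (sg * sin t)) by nra.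
    apply Rabs_lin_comb; [apply Rabs_cos_le_1 |].
    rewrite Rabs_Ropp, (Rabs_sg_mult sg sg_sign); apply Rabs_sin_le_1.
  - replace (snd p - _) with ((a - h) * sin t + (sg * c - b) * (sg * cos t)) by nra.
    apply Rabs_lin_comb; [apply Rabs_sin_le_1 |].
    rewrite (Rabs_sg_mult sg sg_sign); apply Rabs_cos_le_1.
Qed.

End FramePoint.

Lemma xK_frame K s :
  xK K s = padd (pscale (pK K s - 1) (u s)) (pscale (pK K (s + PI / 2) - 1) (v s)).
Proof. unfold xK, yK, psub, padd, pscale; simpl; f_equal; ring. Qed.

Definition du t r : pt := ((cos (t + r) - cos t) / r, (sin (t + r) - sin t) / r).

Lemma dot_u_increment q t r : r <> 0 -> dot q (u (t + r)) - dot q (u t) = r * dot q (du t r).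
Proof. intros Hr; unfold dot, u, du; simpl; field; exact Hr. Qed.

Definition edge_end (K : pt -> Prop) t sg (a : pt) : Prop :=
  edge K t a /\ forall q, edge K t q -> sg * dot q (v t) <= sg * dot a (v t).

Section CompactSet.
Variable K : pt -> Prop.
Hypothesis K_closed : Defs.closed K.
Hypothesis K_nonempty : nonempty K.
Variable M : R.
Hypothesis K_bounded_by : forall p, K p -> Rabs (fst p) <= M /\ Rabs (snd p) <= M.

Lemma bound_nonneg : 0 <= M.
Proof.
  destruct K_nonempty as [p Kp]; destruct (K_bounded_by p Kp).
  pose proof (Rabs_pos (fst p)); lra.
Qed.

Lemma Rabs_dot_le p q : K p -> Rabs (dot p q) <= M * (Rabs (fst q) + Rabs (snd q)).
Proof.
  intros Kp; destruct (K_bounded_by p Kp); unfold dot.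
  eapply Rle_trans; [apply Rabs_triang |]; rewrite !Rabs_mult.
  pose proof (Rabs_pos (fst q)); pose proof (Rabs_pos (snd q)); nra.
Qed.

Lemma Rabs_dot_v_le p t : K p -> Rabs (dot p (v t)) <= 2 * M.
Proof.
  intros Kp; eapply Rle_trans; [apply Rabs_dot_le; exact Kp |]; simpl; rewrite Rabs_Ropp.
  pose proof (Rabs_cos_le_1 t); pose proof (Rabs_sin_le_1 t); pose proof bound_nonneg; nra.
Qed.

Lemma Rabs_dot_u_le p t : K p -> Rabs (dot p (u t)) <= 2 * M.
Proof.
  intros Kp; eapply Rle_trans; [apply Rabs_dot_le; exact Kp |]; simpl.
  pose proof (Rabs_cos_le_1 t); pose proof (Rabs_sin_le_1 t); pose proof bound_nonneg; nra.
Qed.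

Section Frame.
Variables (t sg : R).
Hypothesis sg_sign : sg = 1 \/ sg = -1.

Definition near_level_above (h x : R) : Prop :=
  forall d, 0 < d -> exists p, K p /\ h - d < dot p (u t) /\ x <= sg * dot p (v t).

Lemma not_near_level_above h c : ~ near_level_above h c ->
  exists d, 0 < d /\ forall p, K p -> h - d < dot p (u t) -> sg * dot p (v t) < c.
Proof.
  intros Hn; apply NNPP; intros Hno; apply Hn; intros d Hd; apply NNPP; intros Hnp.
  apply Hno; exists d; split; [exact Hd |]; intros p Kp Hp.
  apply Rnot_le_lt; intros Hle; apply Hnp; exists p; auto.
Qed.

Lemma near_level_above_le h x : near_level_above h x -> x <= 2 * M.
Proof.
  intros Hx; destruct (Hx 1 Rlt_0_1) as [p [Kp [_ Hp]]].
  pose proof (Rabs_dot_v_le p t Kp) as Hv; rewrite <- (Rabs_sg_mult sg sg_sign) in Hv.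
  pose proof (Rle_abs (sg * dot p (v t))); lra.
Qed.

(* [b] is the limsup of [sg * p . v_t] as [p . u_t] tends to [h] in [K]; closedness puts the
   limit point [h u_t + b sg v_t] in [K]. *)
Lemma near_level_limit_point h x0 :
  (forall p, K p -> dot p (u t) <= h) -> near_level_above h x0 ->
  exists b, x0 <= b /\ K (frame_pt t sg h b) /\ forall c, b < c -> ~ near_level_above h c.
Proof.
  intros Hh Hx0.
  destruct (completeness (near_level_above h)) as [b [Hub Hlub]].
  { exists (2 * M); intros x; apply near_level_above_le. }
  { exists x0; exact Hx0. }
  assert (Habove : forall c, b < c -> ~ near_level_above h c).
  { intros c Hc Hnc; specialize (Hub c Hnc); lra. }
  exists b; split; [apply Hub, Hx0 | split; [| exact Habove]].
  apply K_closed; intros eps Heps.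
  destruct (not_near_level_above h (b + eps / 2) (Habove (b + eps / 2) ltac:(lra)))
    as [d0 [Hd0 Hbelow]].
  assert (Hx : exists x, near_level_above h x /\ b - eps / 2 < x).
  { apply NNPP; intros Hn; assert (b <= b - eps / 2); [| lra].
    apply Hlub; intros x Hx; apply Rnot_lt_le; intros Hlt; apply Hn; exists x; auto. }
  destruct Hx as [x [Hx Hbx]].
  destruct (Hx (Rmin d0 (eps / 2))) as [p [Kp [Hpu Hpv]]]; [apply Rmin_pos; lra |].
  pose proof (Rmin_l d0 (eps / 2)); pose proof (Rmin_r d0 (eps / 2)).
  specialize (Hbelow p Kp ltac:(lra)); specialize (Hh p Kp).
  destruct (frame_pt_close t sg sg_sign p h b) as [H1 H2].
  assert (Hu : Rabs (dot p (u t) - h) < eps / 2) by (apply Rabs_def1; lra).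
  assert (Hv : Rabs (sg * dot p (v t) - b) < eps / 2) by (apply Rabs_def1; lra).
  exists p; split; [exact Kp | lra].
Qed.

End Frame.

Lemma pK_is_support t : is_support K t (pK K t).
Proof.
  set (E := fun y => exists p, K p /\ y = dot p (u t)).
  destruct (completeness E) as [h [Hub Hlub]].
  { exists (2 * M); intros y [p [Kp ->]].
    pose proof (Rle_abs (dot p (u t))); pose proof (Rabs_dot_u_le p t Kp); lra. }
  { destruct K_nonempty as [p Kp]; exists (dot p (u t)), p; auto. }
  assert (Hle : forall p, K p -> dot p (u t) <= h) by (intros p Kp; apply Hub; exists p; auto).
  destruct (near_level_limit_point t 1 (or_introl eq_refl) h (- (2 * M)) Hle)
    as [b [_ [Kq _]]].
  { intros d Hd; apply NNPP; intros Hn; assert (h <= h - d); [| lra].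
    apply Hlub; intros y [p [Kp ->]]; apply Rnot_lt_le; intros Hlt; apply Hn.
    exists p; split; [exact Kp | split; [exact Hlt |]].
    pose proof (Rabs_dot_v_le p t Kp) as Hv; apply Rabs_le_between in Hv; lra. }
  unfold pK; apply epsilon_spec; exists h; split; [| exact Hle].
  exists (frame_pt t 1 h b); split; [exact Kq | apply dot_frame_pt_u].
Qed.

Lemma exists_edge_end t sg : sg = 1 \/ sg = -1 -> exists a, edge_end K t sg a.
Proof.
  intros Hsg; destruct (pK_is_support t) as [[p0 [Kp0 Hp0]] Hmax].
  destruct (near_level_limit_point t sg Hsg (pK K t) (sg * dot p0 (v t)) Hmax)
    as [b [_ [Kq Habove]]].
  { intros d Hd; exists p0; repeat split; auto; lra. }
  exists (frame_pt t sg (pK K t) b); split; [split; [exact Kq | apply dot_frame_pt_u] |].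
  intros q [Kq' Hq]; rewrite (dot_frame_pt_v t sg Hsg); apply Rnot_lt_le; intros Hlt.
  apply (Habove _ Hlt); intros d Hd; exists q; repeat split; auto; lra.
Qed.

Lemma edge_end_near_maximizers t sg a eps : sg = 1 \/ sg = -1 -> edge_end K t sg a -> 0 < eps ->
  exists d, 0 < d /\ forall p, K p -> pK K t - d < dot p (u t) ->
    sg * dot p (v t) < sg * dot a (v t) + eps.
Proof.
  intros Hsg [[Ka Ha] Hend] Heps; destruct (pK_is_support t) as [_ Hmax].
  destruct (near_level_limit_point t sg Hsg (pK K t) (sg * dot a (v t)) Hmax)
    as [b [_ [Kq Habove]]].
  { intros d Hd; exists a; repeat split; auto; lra. }
  assert (Hba : b <= sg * dot a (v t)).
  { rewrite <- (dot_frame_pt_v t sg Hsg (pK K t) b); apply Hend.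
    split; [exact Kq | apply dot_frame_pt_u]. }
  apply not_near_level_above, Habove; lra.
Qed.

Lemma vplus_edge_end t : edge_end K t 1 (vplus K t).
Proof.
  destruct (exists_edge_end t 1 (or_introl eq_refl)) as [a [Ea Ha]].
  destruct (epsilon_spec (inhabits (0, 0)) (fun p => edge K t p /\
      forall q, edge K t q -> dot q (v t) <= dot p (v t))) as [E Hmax].
  { exists a; split; [exact Ea |]; intros q Eq; specialize (Ha q Eq); lra. }
  unfold edge_end, vplus; split; [exact E |]; intros q Eq; specialize (Hmax q Eq); lra.
Qed.

Lemma vminus_edge_end t : edge_end K t (-1) (vminus K t).
Proof.
  destruct (exists_edge_end t (-1) (or_intror eq_refl)) as [a [Ea Ha]].
  destruct (epsilon_spec (inhabits (0, 0)) (fun p => edge K t p /\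
      forall q, edge K t q -> dot p (v t) <= dot q (v t))) as [E Hmin].
  { exists a; split; [exact Ea |]; intros q Eq; specialize (Ha q Eq); lra. }
  unfold edge_end, vminus; split; [exact E |]; intros q Eq; specialize (Hmin q Eq); lra.
Qed.

Lemma pK_increment_bounds t r a p : edge K t a -> K p -> dot p (u (t + r)) = pK K (t + r) ->
  dot a (u (t + r)) - dot a (u t) <= pK K (t + r) - pK K t <= dot p (u (t + r)) - dot p (u t).
Proof.
  intros [Ka Ha] Kp Hp.
  destruct (pK_is_support (t + r)) as [_ Hr]; destruct (pK_is_support t) as [_ H0].
  specialize (Hr a Ka); specialize (H0 p Kp); lra.
Qed.

Lemma Rabs_dot_du_le p t r e : K p ->
  Rabs (fst (du t r) - fst (v t)) < e -> Rabs (snd (du t r) - snd (v t)) < e ->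
  Rabs (dot p (du t r) - dot p (v t)) <= 2 * M * e /\ Rabs (dot p (du t r)) <= 2 * M * (1 + e).
Proof.
  intros Kp H1 H2; pose proof bound_nonneg.
  assert (E : dot p (du t r) - dot p (v t) = dot p (psub (du t r) (v t)))
    by (unfold dot, psub; simpl; ring).
  pose proof (Rabs_dot_le p (psub (du t r) (v t)) Kp) as Hd; rewrite <- E in Hd.
  change (fst (psub (du t r) (v t))) with (fst (du t r) - fst (v t)) in Hd.
  change (snd (psub (du t r) (v t))) with (snd (du t r) - snd (v t)) in Hd.
  assert (Hdiff : Rabs (dot p (du t r) - dot p (v t)) <= 2 * M * e) by nra.
  pose proof (Rabs_dot_v_le p t Kp).
  pose proof (Rabs_triang (dot p (du t r) - dot p (v t)) (dot p (v t))) as Ht.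
  replace (dot p (du t r) - dot p (v t) + dot p (v t)) with (dot p (du t r)) in Ht by ring.
  split; lra.
Qed.

(* The quotient lies between [a . du] and [p . du] for a maximiser [p] at [t + sg s]; being a
   near maximiser at [t], [p] satisfies [sg p . v_t < sg a . v_t + eps / 2]. *)
Lemma pK_quotient_close t sg a s eps e d0 :
  sg = 1 \/ sg = -1 -> edge K t a -> 0 < s -> 0 < e <= 1 -> 2 * M * e < eps / 2 ->
  8 * M * s < d0 ->
  (forall p, K p -> pK K t - d0 < dot p (u t) -> sg * dot p (v t) < sg * dot a (v t) + eps / 2) ->
  Rabs (fst (du t (sg * s)) - fst (v t)) < e -> Rabs (snd (du t (sg * s)) - snd (v t)) < e ->
  Rabs ((pK K (t + sg * s) - pK K t) / (sg * s) - dot a (v t)) < eps.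
Proof.
  intros Hsg Ea Hs He HMe Hsd0 Hgap H1 H2.
  destruct (pK_is_support (t + sg * s)) as [[p [Kp Hp]] _].
  assert (Hr : sg * s <> 0) by (destruct Hsg as [-> | ->]; lra).
  pose proof (pK_increment_bounds _ _ _ _ Ea Kp Hp) as Hincr.
  rewrite !(dot_u_increment _ _ _ Hr) in Hincr.
  destruct (Rabs_dot_du_le a t (sg * s) e (proj1 Ea) H1 H2) as [Hav Ha].
  destruct (Rabs_dot_du_le p t (sg * s) e Kp H1 H2) as [Hpv Hp'].
  set (da := dot a (du t (sg * s))) in *; set (dp := dot p (du t (sg * s))) in *.
  assert (Hnear : pK K t - d0 < dot p (u t)).
  { pose proof (dot_u_increment p t (sg * s) Hr) as Ep; fold dp in Ep.
    assert (Hdiff : Rabs (sg * s * (dp - da)) <= s * (4 * M * (1 + e))).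
    { rewrite Rmult_assoc, (Rabs_sg_mult sg Hsg), Rabs_mult, (Rabs_pos_eq s) by lra.
      apply Rmult_le_compat_l; [lra |].
      pose proof (Rabs_triang dp (- da)) as Ht; rewrite Rabs_Ropp in Ht; unfold Rminus; lra. }
    apply Rabs_le_between in Hdiff; nra. }
  specialize (Hgap p Kp Hnear).
  pose proof (sg_quotient_between sg Hsg s da dp _ Hs Hincr) as Hq.
  set (Q := (pK K (t + sg * s) - pK K t) / (sg * s)) in *.
  rewrite <- (Rabs_sg_mult sg Hsg) in Hav, Hpv |- *.
  apply Rabs_le_between in Hav; apply Rabs_le_between in Hpv.
  apply Rabs_def1; nra.
Qed.

Lemma pK_side_derive t sg a : sg = 1 \/ sg = -1 -> edge_end K t sg a ->
  is_side_derive sg (pK K) t (dot a (v t)).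
Proof.
  intros Hsg Ha; apply filterlim_locally; intros [eps Heps]; simpl.
  destruct (edge_end_near_maximizers t sg a (eps / 2) Hsg Ha ltac:(lra)) as [d0 [Hd0 Hgap]].
  pose proof bound_nonneg as HM.
  set (e := Rmin 1 (eps / (4 * (M + 1)))).
  assert (He : 0 < e <= 1).
  { split; [apply Rmin_pos; [lra | apply Rdiv_lt_0_compat; lra] | apply Rmin_l]. }
  assert (HMe : 2 * M * e < eps / 2).
  { assert (e * (4 * (M + 1)) <= eps) by (apply Rle_div_r; [lra | apply Rmin_r]).
    nra. }
  apply (filter_imp (fun s => (Rabs (fst (du t (sg * s)) - fst (v t)) < e /\
                               Rabs (snd (du t (sg * s)) - snd (v t)) < e) /\
                              0 < s < d0 / (8 * (M + 1)))).
  - intros s [[H1 H2] Hs].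
    assert (Hsd0 : 8 * M * s < d0).
    { assert (s * (8 * (M + 1)) < d0) by (apply Rlt_div_r; lra).
      nra. }
    exact (pK_quotient_close t sg a s eps e d0 Hsg (proj1 Ha) (proj1 Hs) He HMe Hsd0 Hgap H1 H2).
  - apply filter_and.
    { exact (is_side_derive_pt_eventually _ _ _ _ _ (u_side_derive sg t Hsg) (proj1 He)). }
    apply (at_right_0_intro _ (d0 / (8 * (M + 1)))); [apply Rdiv_lt_0_compat; lra | auto].
Qed.

Lemma yK_xK_side_derive t sg A C : sg = 1 \/ sg = -1 ->
  edge_end K t sg A -> edge_end K (t + PI / 2) sg C ->
  let g := pK K (t + PI / 2) - dot A (v t) in
  let h := pK K t - dot C (u t) in
  is_side_derive_pt sg (yK K) t (padd (pscale (- g) (u t)) (pscale h (v t))) /\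
  is_side_derive_pt sg (xK K) t (padd (pscale (- (g - 1)) (u t)) (pscale (h - 1) (v t))).
Proof.
  intros Hsg HA HC g h.
  pose proof (pK_side_derive t sg A Hsg HA) as dA.
  pose proof (is_side_derive_shift sg (pK K) t (PI / 2) _ (pK_side_derive _ sg C Hsg HC)) as dC.
  rewrite dot_v_plus_PI2 in dC.
  split.
  - replace (padd (pscale (- g) (u t)) (pscale h (v t))) with
      (padd (pscale (dot A (v t) - pK K (t + PI / 2)) (u t))
            (pscale (pK K t + - dot C (u t)) (v t)))
      by (unfold g, h; f_equal; f_equal; ring).
    exact (is_side_derive_frame_curve sg _ _ t _ _ Hsg dA dC).
  - pose proof (is_side_derive_frame_curve sg _ _ t _ _ Hsg
      (is_side_derive_sub_const _ _ _ 1 _ dA) (is_side_derive_sub_const _ _ _ 1 _ dC)) as Hx.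
    destruct Hx as [Hx1 Hx2]; split;
      (eapply is_side_derive_ext; [intros s; rewrite xK_frame; reflexivity | | eassumption]);
      unfold g, h; simpl; ring.
Qed.

End CompactSet.

Theorem theorem5p7 (omega : R) (K : pt -> Prop) :
  0 < omega <= PI / 2 -> is_cap omega K ->
  (forall t, 0 <= t < omega ->
     right_deriv (yK K) t
       (padd (pscale (- gplus K t) (u t)) (pscale (hplus K t) (v t))) /\
     right_deriv (xK K) t
       (padd (pscale (- (gplus K t - 1)) (u t)) (pscale (hplus K t - 1) (v t)))) /\
  (forall t, 0 < t <= omega ->
     left_deriv (yK K) t
       (padd (pscale (- gminus K t) (u t)) (pscale (hminus K t) (v t))) /\
     left_deriv (xK K) t
       (padd (pscale (- (gminus K t - 1)) (u t)) (pscale (hminus K t - 1) (v t)))).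
Proof.
  intros _ [Hne [Hcl [[M HM] _]]].
  split; intros t _.
  - pose proof (vplus_edge_end K Hcl Hne M HM t) as HA.
    pose proof (vplus_edge_end K Hcl Hne M HM (t + PI / 2)) as HC.
    destruct (yK_xK_side_derive K Hcl Hne M HM t 1 _ _ (or_introl eq_refl) HA HC) as [Hy Hx].
    unfold gplus, hplus, Aplus, Cplus.
    rewrite yK_coeff_v, yK_coeff_u; [split; apply right_deriv_of_side; assumption | |].
    + rewrite <- u_plus_PI2; apply HC.
    + apply HA.
  - pose proof (vminus_edge_end K Hcl Hne M HM t) as HA.
    pose proof (vminus_edge_end K Hcl Hne M HM (t + PI / 2)) as HC.
    destruct (yK_xK_side_derive K Hcl Hne M HM t (-1) _ _ (or_intror eq_refl) HA HC) as [Hy Hx].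
    unfold gminus, hminus, Aminus, Cminus.
    rewrite yK_coeff_v, yK_coeff_u; [split; apply left_deriv_of_side; assumption | |].
    + rewrite <- u_plus_PI2; apply HC.
    + apply HA.
Qed.
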